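(* Let $\gamma\in C^{2}(\mathbb{R})$ be either an odd or an even function which is convex on $(0,\infty)$ and satisfies: (i) $\gamma(0)=\gamma'(0)=0$; (ii) $\frac{\gamma''(t)}{\gamma'(t)}$ is decreasing on $(0,\infty)$; (iii) there is a constant $C_1>0$ with $\frac{t\gamma''(t)}{\gamma'(t)}\geq C_1$ for all $t\in(0,\infty)$; (iv) $\gamma''$ is monotone on $(0,\infty)$. Then $\gamma$ satisfies the doubling condition (D): there exists $\lambda\in(1,\infty)$ such that $\gamma'(\lambda t)\geq 2\gamma'(t)$ for all $t\in(0,\infty)$; and $\gamma$ satisfies the infinitesimally doubling condition (ID): setting $h(t):=t\gamma'(t)-\gamma(t)$, there exists $\varepsilon_0\in(0,\infty)$ such that $h'(t)\geq \varepsilon_0\frac{h(t)}{t}$ for all $t\in(0,\infty)$. *)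

From Stdlib Require Import Reals Lra.
From Coquelicot Require Import Coquelicot.
Open Scope R_scope.

Definition C2 (f : R -> R) : Prop :=
  (forall x, ex_derive f x) /\
  (forall x, ex_derive (Derive f) x) /\
  (forall x, continuous (Derive (Derive f)) x).

Definition odd_fun (f : R -> R) : Prop := forall x, f (- x) = - f x.
Definition even_fun (f : R -> R) : Prop := forall x, f (- x) = f x.

Definition convex_on_pos (f : R -> R) : Prop :=
  forall x y t, 0 < x -> 0 < y -> 0 <= t <= 1 ->
    f (t * x + (1 - t) * y) <= t * f x + (1 - t) * f y.

Definition decreasing_on_pos (g : R -> R) : Prop :=
  forall s t, 0 < s -> s <= t -> g t <= g s.

Definition increasing_on_pos (g : R -> R) : Prop :=
  forall s t, 0 < s -> s <= t -> g s <= g t.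

Definition monotone_on_pos (g : R -> R) : Prop :=
  increasing_on_pos g \/ decreasing_on_pos g.

Definition doubling (f : R -> R) : Prop :=
  exists lam, 1 < lam /\ forall t, 0 < t -> Derive f (lam * t) >= 2 * Derive f t.

Definition hfun (f : R -> R) (t : R) : R := t * Derive f t - f t.

Definition inf_doubling (f : R -> R) : Prop :=
  exists eps0, 0 < eps0 /\
    forall t, 0 < t -> Derive (hfun f) t >= eps0 * (hfun f t / t).

From Stdlib Require Import Reals Lra.
From Coquelicot Require Import Coquelicot.
Open Scope R_scope.

(* Positivity of the elasticity t γ''(t)/γ'(t) forces γ'' γ' > 0, so γ' has no zero on
   (0, oo) and hence a constant sign there; a negative sign would make γ strictly concave,
   contradicting convexity, so γ' > 0 and γ >= 0.  Then ln γ'(s) - C1 ln s is nondecreasing,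
   which gives γ'(μ t) >= μ^C1 γ'(t) and (D) with λ = 2^(1/C1); and h' = t γ'' >= C1 γ'
   >= C1 h / t, which is (ID) with ε0 = C1. *)

Lemma MVT_open (f df : R -> R) (a b : R) : a < b ->
  (forall x, a <= x <= b -> is_derive f x (df x)) ->
  exists c, a < c < b /\ f b - f a = df c * (b - a).
Proof.
  intros Hab Hd.
  destruct (MVT_cor2 f df a b Hab) as [c [E Hc]].
  - intros x Hx. apply is_derive_Reals, Hd, Hx.
  - exists c. split; assumption.
Qed.

Lemma derive_nonneg_le (f df : R -> R) (a b : R) : a <= b ->
  (forall x, a <= x <= b -> is_derive f x (df x)) ->
  (forall x, a < x < b -> 0 <= df x) ->
  f a <= f b.
Proof.
  intros Hab Hd Hpos.
  destruct (Req_dec a b) as [<- | Hne]; [lra |].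
  destruct (MVT_open f df a b ltac:(lra) Hd) as [c [Hc E]].
  specialize (Hpos c Hc). nra.
Qed.

Lemma Rdiv_pos_Rmult_pos (x y : R) : 0 < x / y -> 0 < x * y.
Proof.
  intros H.
  destruct (Req_dec y 0) as [-> | Hy].
  - unfold Rdiv in H. rewrite Rinv_0 in H. lra.
  - replace (x * y) with (x / y * (y * y)) by (field; exact Hy).
    apply Rmult_lt_0_compat; [exact H |].
    destruct (Rlt_or_le 0 y); nra.
Qed.

Lemma continuous_nonvanishing_sign (g : R -> R) : continuity g ->
  (forall t, 0 < t -> g t <> 0) ->
  (forall t, 0 < t -> 0 < g t) \/ (forall t, 0 < t -> g t < 0).
Proof.
  intros Hc Hnz.
  assert (Hno_change : forall s t, 0 < s -> 0 < t -> g s * g t < 0 -> False).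
  { intros s t Hs Ht Hst.
    destruct (IVT_gen g s t 0 Hc) as [c [Hcst Ec]].
    { unfold Rmin, Rmax; repeat destruct Rle_dec; nra. }
    assert (0 < Rmin s t) by (apply Rmin_glb_lt; lra).
    apply (Hnz c); [lra | exact Ec]. }
  assert (g 1 <> 0) by (apply Hnz; lra).
  destruct (Rlt_or_le 0 (g 1)); [left | right]; intros t Ht;
    assert (g t <> 0) by (apply Hnz, Ht);
    destruct (Rlt_or_le 0 (g t)); try lra;
    exfalso; apply (Hno_change 1 t); nra.
Qed.

(* Two chords of a convex function over [1, 2] and [2, 3] give slopes
   df c1 <= df c2 with c1 < c2, which a negative df' forbids. *)
Lemma convex_on_pos_not_derive2_neg (f df d2f : R -> R) :
  (forall x, 0 < x -> is_derive f x (df x)) ->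
  (forall x, 0 < x -> is_derive df x (d2f x)) ->
  convex_on_pos f ->
  ~ (forall x, 0 < x -> d2f x < 0).
Proof.
  intros Hf Hdf Hconv Hneg.
  assert (Hmid := Hconv 1 3 (1/2) ltac:(lra) ltac:(lra) ltac:(lra)).
  replace (1/2 * 1 + (1 - 1/2) * 3) with 2 in Hmid by field.
  destruct (MVT_open f df 1 2 ltac:(lra) ltac:(intros; apply Hf; lra)) as [c1 [Hc1 E1]].
  destruct (MVT_open f df 2 3 ltac:(lra) ltac:(intros; apply Hf; lra)) as [c2 [Hc2 E2]].
  destruct (MVT_open df d2f c1 c2 ltac:(lra) ltac:(intros; apply Hdf; lra)) as [c [Hc E]].
  specialize (Hneg c ltac:(lra)).
  nra.
Qed.

Lemma Derive_pos_of_convex (f : R -> R) :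
  (forall x, ex_derive f x) ->
  (forall x, ex_derive (Derive f) x) ->
  convex_on_pos f ->
  (forall t, 0 < t -> 0 < Derive (Derive f) t * Derive f t) ->
  forall t, 0 < t -> 0 < Derive f t.
Proof.
  intros Hf Hdf Hconv Hprod.
  assert (Hcont : continuity (Derive f)).
  { intro x. apply continuity_pt_filterlim, (ex_derive_continuous (Derive f)), Hdf. }
  assert (Hnz : forall t, 0 < t -> Derive f t <> 0).
  { intros t Ht E. specialize (Hprod t Ht). rewrite E in Hprod. lra. }
  destruct (continuous_nonvanishing_sign _ Hcont Hnz) as [Hpos | Hneg]; [exact Hpos |].
  exfalso.
  apply (convex_on_pos_not_derive2_neg f (Derive f) (Derive (Derive f)));
    [intros; apply Derive_correct, Hf | intros; apply Derive_correct, Hdf | exact Hconv |].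
  intros x Hx. specialize (Hprod x Hx). specialize (Hneg x Hx). nra.
Qed.

Lemma is_derive_log_ratio (g dg : R -> R) (C s : R) :
  0 < s -> 0 < g s -> is_derive g s (dg s) ->
  is_derive (fun s => ln (g s) - C * ln s) s (dg s / g s - C / s).
Proof.
  intros Hs Hg Hd.
  apply (is_derive_minus (fun s => ln (g s)) (fun s => C * ln s)).
  - apply (is_derive_comp ln g); [apply is_derive_ln |]; assumption.
  - apply is_derive_scal, is_derive_ln, Hs.
Qed.

Lemma Rpower_growth_of_elasticity (g dg : R -> R) (C t mu : R) :
  (forall s, 0 < s -> is_derive g s (dg s)) ->
  (forall s, 0 < s -> 0 < g s) ->
  (forall s, 0 < s -> s * dg s / g s >= C) ->
  0 < t -> 1 <= mu ->
  Rpower mu C * g t <= g (mu * t).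
Proof.
  intros Hd Hpos Hel Ht Hmu.
  assert (Hlog : ln (g t) - C * ln t <= ln (g (mu * t)) - C * ln (mu * t)).
  { apply (derive_nonneg_le (fun s => ln (g s) - C * ln s) (fun s => dg s / g s - C / s));
      [nra | |].
    - intros x Hx. apply is_derive_log_ratio; [| apply Hpos | apply Hd]; nra.
    - intros x Hx.
      assert (Hx0 : 0 < x) by nra.
      specialize (Hel x Hx0). specialize (Hpos x Hx0).
      replace (dg x / g x - C / x) with ((x * dg x / g x - C) / x) by (field; lra).
      apply Rmult_le_pos; [lra | left; apply Rinv_0_lt_compat, Hx0]. }
  rewrite ln_mult in Hlog by lra.
  rewrite <- (exp_ln (g (mu * t))) by (apply Hpos; nra).
  rewrite <- (exp_ln (g t)) at 1 by (apply Hpos, Ht).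
  unfold Rpower. rewrite <- exp_plus.
  assert (Hle : C * ln mu + ln (g t) <= ln (g (mu * t))) by lra.
  destruct (Rle_lt_or_eq_dec _ _ Hle) as [Hlt | ->];
    [left; apply exp_increasing, Hlt | right; reflexivity].
Qed.

Lemma doubling_of_elasticity (f : R -> R) (C : R) :
  (forall x, ex_derive (Derive f) x) ->
  0 < C ->
  (forall t, 0 < t -> 0 < Derive f t) ->
  (forall t, 0 < t -> t * Derive (Derive f) t / Derive f t >= C) ->
  doubling f.
Proof.
  intros Hdf HC Hpos Hel.
  assert (Hlam : 1 < Rpower 2 (/ C)).
  { rewrite <- (Rpower_O 2) by lra. apply Rpower_lt; [lra | apply Rinv_0_lt_compat, HC]. }
  exists (Rpower 2 (/ C)). split; [exact Hlam |].
  intros t Ht. apply Rle_ge.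
  replace 2 with (Rpower (Rpower 2 (/ C)) C) at 1
    by (rewrite Rpower_mult, Rinv_l, Rpower_1; lra).
  apply (Rpower_growth_of_elasticity _ (Derive (Derive f))); [| assumption.. | lra].
  intros s _. apply Derive_correct, Hdf.
Qed.

Lemma is_derive_hfun (f : R -> R) (t : R) :
  ex_derive f t -> ex_derive (Derive f) t ->
  is_derive (hfun f) t (t * Derive (Derive f) t).
Proof.
  intros Hf Hdf. unfold hfun.
  replace (t * Derive (Derive f) t)
    with ((1 * Derive f t + t * Derive (Derive f) t) - Derive f t) by ring.
  apply (is_derive_minus (fun s => s * Derive f s) f).
  - apply (is_derive_mult (fun s => s) (Derive f));
      [apply (is_derive_id (K := R_AbsRing)) | apply Derive_correct, Hdf | apply Rmult_comm].
  - apply Derive_correct, Hf.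
Qed.

Lemma inf_doubling_of_elasticity (f : R -> R) (C : R) :
  (forall x, ex_derive f x) ->
  (forall x, ex_derive (Derive f) x) ->
  0 < C ->
  (forall t, 0 < t -> 0 < Derive f t) ->
  (forall t, 0 < t -> 0 <= f t) ->
  (forall t, 0 < t -> t * Derive (Derive f) t / Derive f t >= C) ->
  inf_doubling f.
Proof.
  intros Hf Hdf HC Hpos Hnn Hel.
  exists C. split; [exact HC |].
  intros t Ht.
  rewrite (is_derive_unique _ _ _ (is_derive_hfun f t (Hf t) (Hdf t))).
  specialize (Hpos t Ht). specialize (Hnn t Ht). specialize (Hel t Ht).
  assert (H2 : t * Derive (Derive f) t >= C * Derive f t).
  { apply Rle_ge, (Rmult_le_reg_r (/ Derive f t)); [apply Rinv_0_lt_compat, Hpos |].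
    rewrite Rmult_assoc, Rinv_r by lra. unfold Rdiv in Hel. lra. }
  assert (Hh : hfun f t / t <= Derive f t).
  { unfold hfun. apply (Rmult_le_reg_l t); [exact Ht |].
    replace (t * ((t * Derive f t - f t) / t)) with (t * Derive f t - f t) by (field; lra).
    lra. }
  nra.
Qed.

Theorem lemma3p1 (gamma : R -> R) (C1 : R) :
  C2 gamma ->
  (odd_fun gamma \/ even_fun gamma) ->
  convex_on_pos gamma ->
  gamma 0 = 0 -> Derive gamma 0 = 0 ->
  decreasing_on_pos (fun t => Derive (Derive gamma) t / Derive gamma t) ->
  0 < C1 ->
  (forall t, 0 < t -> t * Derive (Derive gamma) t / Derive gamma t >= C1) ->
  monotone_on_pos (Derive (Derive gamma)) ->
  doubling gamma /\ inf_doubling gamma.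
Proof.
  intros [Hd1 [Hd2 _]] _ Hconv Hzero _ _ HC1 Hel _.
  assert (Hprod : forall t, 0 < t -> 0 < Derive (Derive gamma) t * Derive gamma t).
  { intros t Ht.
    assert (Hq : 0 < t * Derive (Derive gamma) t * Derive gamma t).
    { apply Rdiv_pos_Rmult_pos. specialize (Hel t Ht). lra. }
    rewrite Rmult_assoc in Hq. nra. }
  assert (Hpos := Derive_pos_of_convex gamma Hd1 Hd2 Hconv Hprod).
  assert (Hnn : forall t, 0 < t -> 0 <= gamma t).
  { intros t Ht. rewrite <- Hzero.
    apply (derive_nonneg_le gamma (Derive gamma)); [lra | |].
    - intros x _. apply Derive_correct, Hd1.
    - intros x Hx. left. apply Hpos; lra. }
  split.
  - exact (doubling_of_elasticity gamma C1 Hd2 HC1 Hpos Hel).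
  - exact (inf_doubling_of_elasticity gamma C1 Hd1 Hd2 HC1 Hpos Hnn Hel).
Qed.
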